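(* For every sequent $\Gamma\Rightarrow\Delta$ of $\mathtt{TPDL}$: if $\Gamma\Rightarrow\Delta$ is valid, then $\Gamma\Rightarrow\Delta$ is provable in $\mathtt{GTPDL}$.
   Context: Fix sets $\mathsf{Prop}$ of propositional variables and $\mathsf{AtProg}$ of atomic programs. Formulas and programs of $\mathtt{TPDL}$ are defined by mutual induction: $\varphi ::= \bot \mid p \mid (\varphi\to\varphi) \mid [\pi]\varphi \mid [\pi]^{\leftarrow}\varphi$ and $\pi ::= \alpha \mid \pi;\pi \mid \pi\cup\pi \mid \pi^{*} \mid \varphi?$, where $p\in\mathsf{Prop}$, $\alpha\in\mathsf{AtProg}$. Abbreviations: $\neg\varphi:=\varphi\to\bot$; for a set $\Gamma$, $[\pi]\Gamma=\{[\pi]\varphi:\varphi\in\Gamma\}$, $[\pi]^{\leftarrow}\Gamma=\{[\pi]^{\leftarrow}\varphi:\varphi\in\Gamma\}$. A model is $M=(W,(R_\alpha)_{\alpha\in\mathsf{AtProg}},V)$, $W\neq\emptyset$, $R_\alpha\subseteq W\times W$, $V:W\to\mathcal P(\mathsf{Prop})$. $R_{\pi_0;\pi_1}$ is relational composition, $R_{\pi_0\cup\pi_1}=R_{\pi_0}\cup R_{\pi_1}$, $R_{\pi^*}$ the reflexive–transitive closure of $R_\pi$, $R_{\psi?}=\{(w,w):M,w\models\psi\}$. $M,w\not\models\bot$; $M,w\models p$ iff $p\in V(w)$; $\to$ classical; $M,w\models[\pi]\varphi$ iff $M,v\models\varphi$ whenever $wR_\pi v$; $M,w\models[\pi]^{\leftarrow}\varphi$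 iff $M,v\models\varphi$ whenever $vR_\pi w$. A sequent $\Gamma\Rightarrow\Delta$ is a pair of finite sets of formulas; it is valid if in every model at every state, truth of all formulas of $\Gamma$ implies truth of some formula of $\Delta$. $\mathtt{GTPDL}$ rules (premises / conclusion): (Ax) / $\Gamma\Rightarrow\Delta$ with $\Gamma\cap\Delta\neq\emptyset$; ($\bot$) / $\Gamma,\bot\Rightarrow\Delta$; ($\to$L) $\Gamma\Rightarrow\varphi,\Delta$ and $\Gamma,\psi\Rightarrow\Delta$ / $\Gamma,\varphi\to\psi\Rightarrow\Delta$; ($\to$R) $\Gamma,\varphi\Rightarrow\psi,\Delta$ / $\Gamma\Rightarrow\varphi\to\psi,\Delta$; (Wk) $\Gamma\Rightarrow\Delta$ / $\Gamma'\Rightarrow\Delta'$ with $\Gamma\subseteq\Gamma',\Delta\subseteq\Delta'$; (Cut) $\Gamma\Rightarrow\varphi,\Delta$ and $\Gamma,\varphi\Rightarrow\Delta$ / $\Gamma\Rightarrow\Delta$; ($[\,]$) $\Gamma\Rightarrow\varphi,[\pi]^{\leftarrow}\Delta$ / $[\pi]\Gamma\Rightarrow[\pi]\varphi,\Delta$; ($[\,]^{\leftarrow}$) $\Gamma\Rightarrow\varphi,[\pi]\Delta$ / $[\pi]^{\leftarrow}\Gamma\Rightarrow[\pi]^{\leftarrow}\varphi,\Delta$; ($[;]$L) $\Gamma,[\pi_0][\pi_1]\varphi\Rightarrow\Delta$ / $\Gamma,[\pi_0;\pi_1]\varphi\Rightarrow\Delta$; ($[;]$R) $\Gamma\Rightarrow[\pi_0][\pi_1]\varphi,\Delta$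 / $\Gamma\Rightarrow[\pi_0;\pi_1]\varphi,\Delta$; ($[\cup]$L) $\Gamma,[\pi_0]\varphi,[\pi_1]\varphi\Rightarrow\Delta$ / $\Gamma,[\pi_0\cup\pi_1]\varphi\Rightarrow\Delta$; ($[\cup]$R) $\Gamma\Rightarrow\Delta,[\pi_0]\varphi$ and $\Gamma\Rightarrow\Delta,[\pi_1]\varphi$ / $\Gamma\Rightarrow[\pi_0\cup\pi_1]\varphi,\Delta$; ($[*]$L) $\Gamma,\varphi,[\pi][\pi^*]\varphi\Rightarrow\Delta$ / $\Gamma,[\pi^*]\varphi\Rightarrow\Delta$; ($[*]$R) $\Gamma,\varphi\Rightarrow[\pi]\varphi$ / $[\pi^*]\Gamma,\varphi\Rightarrow[\pi^*]\varphi$; ($[?]$L) $\Gamma\Rightarrow\varphi,\Delta$ and $\Gamma,\psi\Rightarrow\Delta$ / $\Gamma,[\varphi?]\psi\Rightarrow\Delta$; ($[?]$R) $\Gamma,\varphi\Rightarrow\psi,\Delta$ / $\Gamma\Rightarrow[\varphi?]\psi,\Delta$. A $\mathtt{GTPDL}$ proof is a finite tree of sequents, each node the conclusion of a rule instance whose premises are its children (leaves are Ax or $\bot$ instances); provable means having such a proof with the given sequent at the root. *)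

From Stdlib Require Import List Relations.
Import ListNotations.
Set Implicit Arguments.

Section TPDL.
Variables (Prp AtProg : Type).

Inductive form : Type :=
| FBot : form
| FVar : Prp -> form
| FImp : form -> form -> form
| FBox : prog -> form -> form
| FBoxC : prog -> form -> form
with prog : Type :=
| PAt : AtProg -> prog
| PSeq : prog -> prog -> prog
| PCup : prog -> prog -> prog
| PStar : prog -> prog
| PTest : form -> prog.

Record model : Type := Model {
  mW : Type;
  mW_inhab : inhabited mW;
  mR : AtProg -> mW -> mW -> Prop;
  mV : mW -> Prp -> Prop
}.

Fixpoint sat (M : model) (w : mW M) (phi : form) {struct phi} : Prop :=
  match phi with
  | FBot => False
  | FVar p => mV M w p
  | FImp a b => sat M w a -> sat M w b
  | FBox pi a => forall v, rel M pi w v -> sat M v a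
  | FBoxC pi a => forall v, rel M pi v w -> sat M v a
  end
with rel (M : model) (pi : prog) (w v : mW M) {struct pi} : Prop :=
  match pi with
  | PAt al => mR M al w v
  | PSeq p0 p1 => exists u, rel M p0 w u /\ rel M p1 u v
  | PCup p0 p1 => rel M p0 w v \/ rel M p1 w v
  | PStar p => clos_refl_trans (mW M) (fun x y => rel M p x y) w v
  | PTest a => w = v /\ sat M w a
  end.

(* Finite sets of formulas are represented by lists (read as their set of
   members). *)
Definition sequent : Type := (list form * list form)%type.

Definition valid (s : sequent) : Prop :=
  forall (M : model) (w : mW M),
    (forall phi, In phi (fst s) -> sat M w phi) ->
    exists psi, In psi (snd s) /\ sat M w psi.

Definition incl_l (G G' : list form) : Prop := forall x, In x G -> In x G'.

Definition box (pi : prog) (G : list form) := map (FBox pi) G.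
Definition boxC (pi : prog) (G : list form) := map (FBoxC pi) G.

(* GTPDL derivability.  Since sets are represented by lists, ",phi" is
   consing; rule (Wk), which is part of the calculus, absorbs any
   difference between lists denoting the same set. *)
Inductive provable : list form -> list form -> Prop :=
| R_Ax : forall G D phi, In phi G -> In phi D -> provable G D
| R_Bot : forall G D, provable (FBot :: G) D
| R_ImpL : forall G D a b,
    provable G (a :: D) -> provable (b :: G) D -> provable (FImp a b :: G) D
| R_ImpR : forall G D a b,
    provable (a :: G) (b :: D) -> provable G (FImp a b :: D)
| R_Wk : forall G D G' D',
    provable G D -> incl_l G G' -> incl_l D D' -> provable G' D'
| R_Cut : forall G D a,
    provable G (a :: D) -> provable (a :: G) D -> provable G D
| R_Box : forall G D pi a,
    provable G (a :: boxC pi D) -> provable (box pi G) (FBox pi a :: D)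
| R_BoxC : forall G D pi a,
    provable G (a :: box pi D) -> provable (boxC pi G) (FBoxC pi a :: D)
| R_SeqL : forall G D p0 p1 a,
    provable (FBox p0 (FBox p1 a) :: G) D ->
    provable (FBox (PSeq p0 p1) a :: G) D
| R_SeqR : forall G D p0 p1 a,
    provable G (FBox p0 (FBox p1 a) :: D) ->
    provable G (FBox (PSeq p0 p1) a :: D)
| R_CupL : forall G D p0 p1 a,
    provable (FBox p0 a :: FBox p1 a :: G) D ->
    provable (FBox (PCup p0 p1) a :: G) D
| R_CupR : forall G D p0 p1 a,
    provable G (D ++ [FBox p0 a]) -> provable G (D ++ [FBox p1 a]) ->
    provable G (FBox (PCup p0 p1) a :: D)
| R_StarL : forall G D p a,
    provable (a :: FBox p (FBox (PStar p) a) :: G) D ->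
    provable (FBox (PStar p) a :: G) D
| R_StarR : forall G p a,
    provable (a :: G) [FBox p a] ->
    provable (a :: box (PStar p) G) [FBox (PStar p) a]
| R_TestL : forall G D a b,
    provable G (a :: D) -> provable (b :: G) D ->
    provable (FBox (PTest a) b :: G) D
| R_TestR : forall G D a b,
    provable (a :: G) (b :: D) -> provable G (FBox (PTest a) b :: D).

End TPDL.

(* Completeness through a finite canonical model.  Fix the Fischer-Ladner
   closure C of the sequent; the worlds are the atoms, i.e. the GTPDL-consistent
   partitions of C into a positive and a negative part, and an atomic program
   relates w to v when <a> chi_v is consistent with w.  Since there are finitely
   many atoms, every set of atoms is defined by a formula; for p* the set of
   atoms reachable from w is then defined by a p-invariant, and the induction
   rule ([*]R) shows that consistency of <p*> chi_v forces reachability.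
   Converse boxes are controlled through the adjunction between [p] and
   [p]^<- given by the two modal rules.  The truth lemma follows, and an
   unprovable sequent extends to an atom that refutes it. *)

From Stdlib Require Import List Relations Classical ProofIrrelevance.
Import ListNotations.
Set Implicit Arguments.

Ltac incl_solve :=
  let x := fresh "x" in
  unfold incl_l; intros x; simpl; repeat rewrite in_app_iff; simpl;
  intuition (subst; auto).

Ltac weaken H := eapply R_Wk; [exact H | incl_solve | incl_solve].

Lemma filter_classical (X : Type) (L : list X) (Q : X -> Prop) :
  exists S, forall x, In x S <-> In x L /\ Q x.
Proof.
  induction L as [|a L [S HS]].
  - exists []; simpl; tauto.
  - destruct (classic (Q a)).
    + exists (a :: S); intro x; simpl; rewrite HS; intuition (subst; auto).
    + exists S; intro x; simpl; rewrite HS; intuition (subst; auto); tauto.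
Qed.

Section DerivedRules.
Variables Prp AtProg : Type.
Notation F := (form Prp AtProg).
Notation pv := (@provable Prp AtProg).
Notation Bot := (FBot Prp AtProg).

Definition Neg (a : F) : F := FImp a Bot.

Lemma ax (a : F) {G D} : In a G -> In a D -> pv G D.
Proof. exact (R_Ax G D a). Qed.
Arguments ax a {G D}.

Lemma cut (a : F) {G D} : pv G (a :: D) -> pv (a :: G) D -> pv G D.
Proof. exact (@R_Cut _ _ G D a). Qed.
Arguments cut a {G D}.

Lemma impR_inv G D a b : pv G (FImp a b :: D) -> pv (a :: G) (b :: D).
Proof.
  intro H. apply (cut (FImp a b)); [weaken H |].
  apply R_ImpL; [apply (ax a) | apply (ax b)]; simpl; auto.
Qed.

Lemma negL G D a : pv G (a :: D) -> pv (Neg a :: G) D.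
Proof. intro H. apply R_ImpL; [exact H | apply R_Bot]. Qed.

Lemma negR G D a : pv (a :: G) D -> pv G (Neg a :: D).
Proof. intro H. apply R_ImpR. weaken H. Qed.

Lemma negR_inv G D a : pv G (Neg a :: D) -> pv (a :: G) D.
Proof.
  intro H. apply (cut (Neg a)); [weaken H |].
  apply negL. apply (ax a); simpl; auto.
Qed.

Lemma entail_cut G D x y : pv G (x :: D) -> pv [x] [y] -> pv G (y :: D).
Proof. intros H1 H2. apply (cut x); [weaken H1 | weaken H2]. Qed.

Lemma entail_trans x y z : pv [x] [y] -> pv [y] [z] -> pv [x] [z].
Proof. apply entail_cut. Qed.

Fixpoint imps (l : list F) (x : F) : F :=
  match l with [] => x | a :: l => FImp a (imps l x) end.

Fixpoint disj (l : list F) : F :=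
  match l with [] => Bot | a :: l => FImp (Neg a) (disj l) end.

Lemma imps_R l x G D : pv (l ++ G) (x :: D) -> pv G (imps l x :: D).
Proof.
  revert G; induction l as [|a l IH]; intros G H; simpl in *; auto.
  apply R_ImpR, IH. weaken H.
Qed.

Lemma imps_R_inv l x G D : pv G (imps l x :: D) -> pv (l ++ G) (x :: D).
Proof.
  revert G; induction l as [|a l IH]; intros G H; simpl in *; auto.
  apply impR_inv, IH in H. weaken H.
Qed.

Lemma disj_R l G D : pv G (l ++ D) -> pv G (disj l :: D).
Proof.
  revert G; induction l as [|a l IH]; intros G H; simpl in *; [weaken H |].
  apply R_ImpR, IH, negL. weaken H.
Qed.

Lemma disj_L l G D : (forall x, In x l -> pv (x :: G) D) -> pv (disj l :: G) D.
Proof.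
  revert G; induction l as [|a l IH]; intros G H; simpl in *; [apply R_Bot |].
  apply R_ImpL; [apply negR, H | apply IH]; auto.
Qed.

Lemma disj_R_inv l G D : pv G (disj l :: D) -> pv G (l ++ D).
Proof.
  intro H. apply (cut (disj l)); [weaken H |].
  apply disj_L. intros x Hx. apply (ax x); simpl; rewrite ?in_app_iff; auto.
Qed.

Lemma box_mono p a b : pv [a] [b] -> pv [FBox p a] [FBox p b].
Proof. exact (@R_Box _ _ [a] [] p b). Qed.

Lemma adj_box p x y : pv [] [x; FBoxC p y] -> pv [] [FBox p x; y].
Proof. exact (@R_Box _ _ [] [y] p x). Qed.

Lemma adj_boxC p x y : pv [] [y; FBox p x] -> pv [] [FBoxC p y; x].
Proof. exact (@R_BoxC _ _ [] [x] p y). Qed.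

Lemma box_star_ind p a : pv [a] [FBox p a] -> pv [a] [FBox (PStar p) a].
Proof. exact (@R_StarR _ _ [] p a). Qed.

Lemma box_seq p q a : pv [FBox (PSeq p q) a] [FBox p (FBox q a)].
Proof. apply R_SeqL. apply (ax (FBox p (FBox q a))); simpl; auto. Qed.

Lemma box_cup_l p q a : pv [FBox (PCup p q) a] [FBox p a].
Proof. apply R_CupL. apply (ax (FBox p a)); simpl; auto. Qed.

Lemma box_cup_r p q a : pv [FBox (PCup p q) a] [FBox q a].
Proof. apply R_CupL. apply (ax (FBox q a)); simpl; auto. Qed.

Lemma box_star_refl p a : pv [FBox (PStar p) a] [a].
Proof. apply R_StarL. apply (ax a); simpl; auto. Qed.

Lemma box_star_step p a : pv [FBox (PStar p) a] [FBox p (FBox (PStar p) a)].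
Proof. apply R_StarL. apply (ax (FBox p (FBox (PStar p) a))); simpl; auto. Qed.

Lemma box_star_shift p a : pv [FBox (PStar p) a] [FBox (PStar p) (FBox p a)].
Proof.
  assert (Hstep := box_star_step p a).
  apply (entail_trans (box_star_ind Hstep)), box_mono.
  apply (entail_trans Hstep), box_mono, box_star_refl.
Qed.

Lemma box_test b a : pv [FBox (PTest b) a; b] [a].
Proof. apply R_TestL; [apply (ax b) | apply (ax a)]; simpl; auto. Qed.

(* The rules ([ ]) and ([ ]^<-) make [p] and its converse adjoint; this is the
   unit of that adjunction, and each converse law below is obtained by pushing
   the matching box law through it. *)
Lemma boxC_unit p a : pv [] [FBox p (Neg (FBoxC p a)); a].
Proof. apply adj_box, negR. apply (ax (FBoxC p a)); simpl; auto. Qed.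

Lemma boxC_intro p a x : pv [] [a; FBox p (Neg x)] -> pv [x] [FBoxC p a].
Proof. intro H. apply negR_inv. apply adj_boxC in H. weaken H. Qed.

Lemma boxC_seq p q a : pv [FBoxC (PSeq p q) a] [FBoxC q (FBoxC p a)].
Proof.
  apply boxC_intro, adj_boxC.
  assert (H := entail_cut (boxC_unit (PSeq p q) a)
                 (box_seq p q (Neg (FBoxC (PSeq p q) a)))).
  weaken H.
Qed.

Lemma boxC_cup_l p q a : pv [FBoxC (PCup p q) a] [FBoxC p a].
Proof.
  apply boxC_intro.
  assert (H := entail_cut (boxC_unit (PCup p q) a)
                 (box_cup_l p q (Neg (FBoxC (PCup p q) a)))).
  weaken H.
Qed.

Lemma boxC_cup_r p q a : pv [FBoxC (PCup p q) a] [FBoxC q a].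
Proof.
  apply boxC_intro.
  assert (H := entail_cut (boxC_unit (PCup p q) a)
                 (box_cup_r p q (Neg (FBoxC (PCup p q) a)))).
  weaken H.
Qed.

Lemma boxC_star_refl p a : pv [FBoxC (PStar p) a] [a].
Proof.
  apply negR_inv.
  exact (entail_cut (boxC_unit (PStar p) a) (box_star_refl p _)).
Qed.

Lemma boxC_star_step p a :
  pv [FBoxC (PStar p) a] [FBoxC p (FBoxC (PStar p) a)].
Proof.
  apply boxC_intro, adj_boxC.
  assert (H := entail_cut (boxC_unit (PStar p) a)
                 (box_star_shift p (Neg (FBoxC (PStar p) a)))).
  weaken H.
Qed.

Lemma boxC_test b a : pv [FBoxC (PTest b) a; b] [a].
Proof.
  apply (cut (FBox (PTest b) (Neg (FBoxC (PTest b) a)))).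
  - assert (H := boxC_unit (PTest b) a). weaken H.
  - apply R_TestL; [apply (ax b); simpl; auto |].
    apply negL. apply (ax (FBoxC (PTest b) a)); simpl; auto.
Qed.

End DerivedRules.

Arguments ax {Prp AtProg} a {G D}.
Arguments cut {Prp AtProg} a {G D}.

Scheme form_mut := Induction for form Sort Prop
  with prog_mut := Induction for prog Sort Prop.
Combined Scheme form_prog_mutind from form_mut, prog_mut.

Section FischerLadner.
Variables Prp AtProg : Type.
Notation F := (form Prp AtProg).
Notation P := (prog Prp AtProg).

Definition fl_succ (x : F) : list F :=
  match x with
  | FImp a b => [a; b]
  | FBox p a =>
    match p with
    | PAt _ _ => [a]
    | PSeq p1 p2 => [FBox p1 (FBox p2 a)]
    | PCup p1 p2 => [FBox p1 a; FBox p2 a]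
    | PStar p1 => [a; FBox p1 (FBox p a)]
    | PTest b => [b; a]
    end
  | FBoxC p a =>
    match p with
    | PAt _ _ => [a]
    | PSeq p1 p2 => [FBoxC p2 (FBoxC p1 a)]
    | PCup p1 p2 => [FBoxC p1 a; FBoxC p2 a]
    | PStar p1 => [a; FBoxC p1 (FBoxC p a)]
    | PTest b => [b; a]
    end
  | _ => []
  end.

Fixpoint fl (f : F) : list F :=
  match f with
  | FImp a b => f :: fl a ++ fl b
  | FBox p a => flb p a ++ fl a
  | FBoxC p a => flc p a ++ fl a
  | _ => [f]
  end
with flb (p : P) (a : F) : list F :=
  match p with
  | PAt _ _ => [FBox p a]
  | PSeq p1 p2 => FBox p a :: flb p1 (FBox p2 a) ++ flb p2 a
  | PCup p1 p2 => FBox p a :: flb p1 a ++ flb p2 a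
  | PStar p1 => FBox p a :: flb p1 (FBox p a)
  | PTest b => FBox p a :: fl b
  end
with flc (p : P) (a : F) : list F :=
  match p with
  | PAt _ _ => [FBoxC p a]
  | PSeq p1 p2 => FBoxC p a :: flc p2 (FBoxC p1 a) ++ flc p1 a
  | PCup p1 p2 => FBoxC p a :: flc p1 a ++ flc p2 a
  | PStar p1 => FBoxC p a :: flc p1 (FBoxC p a)
  | PTest b => FBoxC p a :: fl b
  end.

Lemma flb_head p a : In (FBox p a) (flb p a).
Proof. destruct p; simpl; auto. Qed.

Lemma flc_head p a : In (FBoxC p a) (flc p a).
Proof. destruct p; simpl; auto. Qed.

Lemma fl_head f : In f (fl f).
Proof. destruct f; simpl; rewrite ?in_app_iff; auto using flb_head, flc_head. Qed.

Definition succ_closed (L K : list F) := forall x, In x L -> incl (fl_succ x) K.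
Definition fl_closed (C : list F) := succ_closed C C.

Lemma succ_closed_nil K : succ_closed [] K.
Proof. intros ? []. Qed.

Lemma succ_closed_cons x L K :
  incl (fl_succ x) K -> succ_closed L K -> succ_closed (x :: L) K.
Proof. intros Hx HL y [<- | Hy]; auto. Qed.

Lemma succ_closed_app L1 L2 K :
  succ_closed L1 K -> succ_closed L2 K -> succ_closed (L1 ++ L2) K.
Proof. intros H1 H2 y Hy. apply in_app_iff in Hy as [Hy | Hy]; auto. Qed.

Lemma succ_closed_weaken L K K' : succ_closed L K -> incl K K' -> succ_closed L K'.
Proof. intros H HK y Hy. eapply incl_tran; eauto. Qed.

Ltac fl_incl :=
  let x := fresh "x" in
  intros x; simpl; rewrite ?in_app_iff; simpl; rewrite ?in_app_iff;
  intuition (subst; auto using fl_head, flb_head, flc_head).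

Ltac fl_close :=
  repeat first
    [ apply succ_closed_nil | apply succ_closed_app
    | apply succ_closed_cons; [fl_incl |]
    | eapply succ_closed_weaken;
      [ match goal with H : _ |- _ =>
          first [ apply (proj1 (H _)) | apply (proj2 (H _)) | apply H ] end
      | fl_incl ] ].

Lemma fl_succ_closed :
  (forall f, succ_closed (fl f) (fl f)) /\
  (forall p a, succ_closed (flb p a) (flb p a ++ fl a) /\
               succ_closed (flc p a) (flc p a ++ fl a)).
Proof.
  apply (form_prog_mutind
    (fun f => succ_closed (fl f) (fl f))
    (fun p => forall a, succ_closed (flb p a) (flb p a ++ fl a) /\
                        succ_closed (flc p a) (flc p a ++ fl a)));
    simpl; intros; try split; fl_close.
Qed.

Definition fl_closure (l : list F) : list F := flat_map fl l.

Lemma fl_closure_closed l : fl_closed (fl_closure l).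
Proof.
  intros x Hx y Hy. apply in_flat_map in Hx as [f [Hf Hx]].
  apply in_flat_map. exists f. split; auto. exact (proj1 fl_succ_closed f x Hx y Hy).
Qed.

Lemma fl_closure_incl l : incl l (fl_closure l).
Proof. intros f Hf. apply in_flat_map. exists f. auto using fl_head. Qed.

Variable C : list F.
Hypothesis HC : fl_closed C.

Lemma fl_box_arg p : forall a, In (FBox p a) C -> In a C.
Proof.
  induction p; intros b Hb; pose proof (HC _ Hb) as Hs; simpl in Hs;
    solve [ apply Hs; simpl; auto | apply IHp2, IHp1, Hs; simpl; auto
          | apply IHp1, Hs; simpl; auto ].
Qed.

Lemma fl_boxC_arg p : forall a, In (FBoxC p a) C -> In a C.
Proof.
  induction p; intros b Hb; pose proof (HC _ Hb) as Hs; simpl in Hs;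
    solve [ apply Hs; simpl; auto | apply IHp1, IHp2, Hs; simpl; auto
          | apply IHp1, Hs; simpl; auto ].
Qed.

End FischerLadner.

Section Partitions.
Variables Prp AtProg : Type.
Notation F := (form Prp AtProg).
Notation pv := (@provable Prp AtProg).

Fixpoint pos_part (C : list F) (bs : list bool) : list F :=
  match C, bs with
  | x :: C', true :: bs' => x :: pos_part C' bs'
  | _ :: C', false :: bs' => pos_part C' bs'
  | _, _ => []
  end.

Fixpoint neg_part (C : list F) (bs : list bool) : list F :=
  match C, bs with
  | x :: C', false :: bs' => x :: neg_part C' bs'
  | _ :: C', true :: bs' => neg_part C' bs'
  | _, _ => []
  end.

Lemma pos_part_in C bs y : In y (pos_part C bs) -> In y C.
Proof.
  revert bs; induction C as [|x C IH]; intros [|[|] bs] H; simpl in *;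
    intuition eauto.
Qed.

Lemma parts_cover C bs y :
  length bs = length C -> In y C -> In y (pos_part C bs) \/ In y (neg_part C bs).
Proof.
  revert bs; induction C as [|x C IH]; intros [|[|] bs] Hl H; simpl in *;
    try discriminate; intuition (subst; auto); destruct (IH bs); auto.
Qed.

Lemma parts_differ C b1 b2 :
  length b1 = length C -> length b2 = length C -> b1 <> b2 ->
  exists y, (In y (pos_part C b1) /\ In y (neg_part C b2)) \/
            (In y (neg_part C b1) /\ In y (pos_part C b2)).
Proof.
  revert b1 b2; induction C as [|x C IH];
    intros [|c1 b1] [|c2 b2] H1 H2 Hne; simpl in *; try discriminate; [congruence|].
  injection H1; injection H2; intros.
  destruct c1, c2; try (exists x; simpl; auto; fail);
    destruct (IH b1 b2) as [y Hy]; auto; try congruence; exists y; simpl; tauto.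
Qed.

Lemma lindenbaum C G D :
  ~ pv G D ->
  exists bs, length bs = length C /\ ~ pv (pos_part C bs ++ G) (neg_part C bs ++ D).
Proof.
  revert G D; induction C as [|x C IH]; intros G D H.
  - exists []; simpl; auto.
  - destruct (classic (pv (x :: G) D)) as [H1|H1].
    + destruct (classic (pv G (x :: D))) as [H2|H2].
      * exfalso; apply H, (cut x); auto.
      * destruct (IH _ _ H2) as [bs [Hl Hb]]. exists (false :: bs); simpl; split; auto.
        intro Hc; apply Hb; weaken Hc.
    + destruct (IH _ _ H1) as [bs [Hl Hb]]. exists (true :: bs); simpl; split; auto.
      intro Hc; apply Hb; weaken Hc.
Qed.

End Partitions.

Fixpoint bool_lists (n : nat) : list (list bool) :=
  match n with
  | 0 => [[]]
  | S n => map (cons true) (bool_lists n) ++ map (cons false) (bool_lists n)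
  end.

Lemma bool_lists_complete bs : In bs (bool_lists (length bs)).
Proof.
  induction bs as [|[|] bs IH]; simpl; auto; apply in_or_app; [left|right];
    apply in_map; auto.
Qed.

Section Atoms.
Variables (Prp AtProg : Type) (C : list (form Prp AtProg)).
Notation F := (form Prp AtProg).
Notation pv := (@provable Prp AtProg).

Definition is_atom (bs : list bool) :=
  length bs = length C /\ ~ pv (pos_part C bs) (neg_part C bs).

Definition atom := {bs | is_atom bs}.

Definition pos (w : atom) := pos_part C (proj1_sig w).
Definition neg (w : atom) := neg_part C (proj1_sig w).

(* The negation of the characteristic formula of [w]. *)
Definition nchar (w : atom) : F := imps (pos w) (disj (neg w)).

Lemma atom_eq (w v : atom) : proj1_sig w = proj1_sig v -> w = v.
Proof. destruct w, v; simpl; intros ->; f_equal; apply proof_irrelevance. Qed.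

Lemma atom_finite : exists l : list atom, forall w, In w l.
Proof.
  enough (H : forall L, exists l : list atom, forall w, In (proj1_sig w) L -> In w l).
  { destruct (H (bool_lists (length C))) as [l Hl]. exists l. intro w. apply Hl.
    destruct (proj2_sig w) as [Hlen _]. rewrite <- Hlen. apply bool_lists_complete. }
  induction L as [|bs L [l Hl]]; [exists []; intros ? [] |].
  destruct (classic (is_atom bs)) as [Ha|Ha].
  - exists (exist _ bs Ha :: l). intros w [Hw|Hw]; [left; apply atom_eq | right]; auto.
  - exists l. intros w [Hw|Hw]; auto. exfalso. apply Ha. rewrite Hw. apply proj2_sig.
Qed.

Lemma atom_consistent w : ~ pv (pos w) (neg w).
Proof. apply (proj2_sig w). Qed.

Lemma pos_in_C w y : In y (pos w) -> In y C.
Proof. apply pos_part_in. Qed.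

Lemma pos_or_neg w y : In y C -> In y (pos w) \/ In y (neg w).
Proof. apply parts_cover, (proj2_sig w). Qed.

Lemma pos_neg_disjoint w y : In y (pos w) -> In y (neg w) -> False.
Proof. intros H1 H2. apply (atom_consistent w), (ax y); auto. Qed.

Lemma pos_of_provable w y : In y C -> pv (pos w) (y :: neg w) -> In y (pos w).
Proof.
  intros Hy H. destruct (pos_or_neg w y Hy) as [Hp|Hn]; auto.
  exfalso. apply (atom_consistent w). weaken H.
Qed.

Lemma neg_of_not_pos w y : In y C -> ~ In y (pos w) -> In y (neg w).
Proof. intros Hy H. destruct (pos_or_neg w y Hy); tauto. Qed.

Lemma pos_entail w L y : incl L (pos w) -> pv L [y] -> In y C -> In y (pos w).
Proof. intros HL H Hy. apply pos_of_provable; auto. weaken H. Qed.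

Lemma lindenbaum_atom G D : ~ pv G D -> exists w, ~ pv (pos w ++ G) (neg w ++ D).
Proof.
  intro Hn. destruct (lindenbaum C Hn) as [bs [Hl Hb]].
  assert (Ha : is_atom bs) by (split; auto; intro Hc; apply Hb; weaken Hc).
  exists (exist _ bs Ha). exact Hb.
Qed.

Lemma atoms_cover G D : (forall w, pv (pos w ++ G) (neg w ++ D)) -> pv G D.
Proof.
  intro H. apply NNPP. intro Hn.
  destruct (lindenbaum_atom Hn) as [w Hw]. exact (Hw (H w)).
Qed.

Lemma extend_to_atom G D :
  ~ pv G D -> incl G C -> incl D C -> exists w, incl G (pos w) /\ incl D (neg w).
Proof.
  intros Hn HG HD. destruct (lindenbaum_atom Hn) as [w Hw].
  exists w. split; intros f Hf.
  - destruct (pos_or_neg w f (HG f Hf)) as [H|H]; auto.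
    exfalso. apply Hw, (ax f); rewrite in_app_iff; auto.
  - destruct (pos_or_neg w f (HD f Hf)) as [H|H]; auto.
    exfalso. apply Hw, (ax f); rewrite in_app_iff; auto.
Qed.

Lemma nchar_iff w G D : pv G (nchar w :: D) <-> pv (pos w ++ G) (neg w ++ D).
Proof.
  split; intro H; [apply disj_R_inv, imps_R_inv, H | apply imps_R, disj_R, H].
Qed.

Lemma nchar_refutes w : pv (nchar w :: pos w) (neg w).
Proof.
  assert (H : pv [nchar w] [nchar w]) by (apply (ax (nchar w)); simpl; auto).
  apply nchar_iff in H. weaken H.
Qed.

Lemma nchar_other w v : w <> v -> pv (pos w) (nchar v :: neg w).
Proof.
  intro Hne. apply nchar_iff.
  assert (Hbs : proj1_sig v <> proj1_sig w) by (intro E; apply Hne, atom_eq; auto).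
  destruct (parts_differ C (proj1 (proj2_sig v)) (proj1 (proj2_sig w)) Hbs)
    as [y [[H1 H2] | [H1 H2]]];
    apply (ax y); rewrite in_app_iff; auto.
Qed.

Lemma atoms_definable (Q : atom -> Prop) :
  exists phi, forall u, (Q u -> pv (pos u) (phi :: neg u)) /\
                        (~ Q u -> pv (phi :: pos u) (neg u)).
Proof.
  destruct atom_finite as [l Hl]. destruct (filter_classical l Q) as [S HS].
  exists (disj (map (fun u => Neg (nchar u)) S)). intro u. split; intro Hu.
  - apply disj_R.
    assert (H : pv (pos u) (Neg (nchar u) :: neg u)).
    { apply negR. apply nchar_refutes. }
    eapply R_Wk; [exact H | incl_solve |].
    intros x [<- | Hx]; apply in_app_iff; [left | right; auto].
    apply (in_map (fun v => Neg (nchar v))), HS; auto.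
  - apply disj_L. intros x Hx. apply in_map_iff in Hx as [v [<- Hv]].
    apply HS in Hv as [_ Hv]. apply negL, nchar_other.
    intros <-. contradiction.
Qed.

End Atoms.

Section Canonical.
Variables (Prp AtProg : Type) (C : list (form Prp AtProg)).
Notation F := (form Prp AtProg).
Notation P := (prog Prp AtProg).
Notation pv := (@provable Prp AtProg).
Notation atom := (atom C).

(* [w] sees [v] along [p] when [<p> chi_v] is consistent with [w]. *)
Definition acc (w : atom) (p : P) (v : atom) : Prop :=
  ~ pv (pos w) (FBox p (nchar v) :: neg w).

Lemma not_acc_boxC w p v : ~ acc w p v -> pv (pos v) (FBoxC p (nchar w) :: neg v).
Proof.
  intro H. apply NNPP in H.
  assert (Hw : pv [] [nchar w; FBox p (nchar v)]) by (apply nchar_iff; weaken H).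
  apply adj_boxC in Hw.
  assert (Hv : pv [] (nchar v :: [FBoxC p (nchar w)])) by weaken Hw.
  apply nchar_iff in Hv. weaken Hv.
Qed.

Lemma box_R_of_acc w p y :
  (forall u, acc w p u -> pv (pos u) (y :: neg u)) -> pv (pos w) (FBox p y :: neg w).
Proof.
  intro H.
  assert (Hy : pv [] [y; FBoxC p (nchar w)]).
  { apply (atoms_cover (C := C)). intro u. destruct (classic (acc w p u)) as [Hu|Hu].
    - specialize (H u Hu). weaken H.
    - apply not_acc_boxC in Hu. weaken Hu. }
  apply adj_box in Hy.
  assert (Hw : pv [] (nchar w :: [FBox p y])) by weaken Hy.
  apply nchar_iff in Hw. weaken Hw.
Qed.

Lemma boxC_R_of_acc w p y :
  (forall u, acc u p w -> pv (pos u) (y :: neg u)) -> pv (pos w) (FBoxC p y :: neg w).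
Proof.
  intro H.
  assert (Hy : pv [] [y; FBox p (nchar w)]).
  { apply (atoms_cover (C := C)). intro u. destruct (classic (acc u p w)) as [Hu|Hu].
    - specialize (H u Hu). weaken H.
    - apply NNPP in Hu. weaken Hu. }
  apply adj_boxC in Hy.
  assert (Hw : pv [] (nchar w :: [FBoxC p y])) by weaken Hy.
  apply nchar_iff in Hw. weaken Hw.
Qed.

Lemma not_acc_of_box w p v a : In (FBox p a) (pos w) -> In a (neg v) -> ~ acc w p v.
Proof.
  intros Hw Hv Hacc. apply Hacc.
  apply (entail_cut (x := FBox p a)); [apply (ax (FBox p a)); simpl; auto |].
  apply box_mono, nchar_iff. apply (ax a); simpl; rewrite in_app_iff; simpl; auto.
Qed.

Lemma not_acc_of_boxC w p v a : In (FBoxC p a) (pos v) -> In a (neg w) -> ~ acc w p v.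
Proof.
  intros Hv Hw Hacc. apply Hacc.
  assert (H : pv [] [nchar v; FBoxC p a])
    by (apply nchar_iff; apply (ax (FBoxC p a)); rewrite !in_app_iff; simpl; auto).
  apply adj_box in H. weaken H.
Qed.

Variable w0 : atom.

Definition canonical_model : model Prp AtProg :=
  Model (inhabits w0) (fun al w v => acc w (PAt Prp al) v)
        (fun w x => In (FVar AtProg x) (pos w)).

Notation M := canonical_model.

Fixpoint tests_faithful (p : P) : Prop :=
  match p with
  | PAt _ _ => True
  | PSeq p1 p2 | PCup p1 p2 => tests_faithful p1 /\ tests_faithful p2
  | PStar p1 => tests_faithful p1
  | PTest b => In b C /\ forall w, sat M w b <-> In b (pos w)
  end.

Lemma rel_of_acc p : tests_faithful p -> forall w v, acc w p v -> rel M p w v.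
Proof.
  induction p as [al | p1 IH1 p2 IH2 | p1 IH1 p2 IH2 | p1 IH1 | b]; simpl.
  - auto.
  - intros [T1 T2] w v Hacc. apply NNPP; intro Hnr. apply Hacc, R_SeqR, box_R_of_acc.
    intros u Hwu. apply NNPP; intro Huv. apply Hnr. exists u. auto.
  - intros [T1 T2] w v Hacc. apply NNPP; intro Hnr. apply Hacc, R_CupR.
    + apply NNPP; intro H. apply Hnr. left. apply IH1; auto.
      intro H'; apply H; weaken H'.
    + apply NNPP; intro H. apply Hnr. right. apply IH2; auto.
      intro H'; apply H; weaken H'.
  - (* The formula defining the atoms reachable from [w] is a [p1]-invariant
       refuting [v], so star induction puts [FBox (PStar p1) (nchar v)] in [w]. *)
    intros T1 w v Hacc. apply NNPP; intro Hnr.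
    set (reach := clos_refl_trans _ (rel M p1) w).
    destruct (atoms_definable reach) as [phi Hphi].
    assert (Hw : pv (pos w) (phi :: neg w)) by (apply Hphi, rt_refl).
    assert (Hinv : pv [phi] [FBox p1 phi]).
    { apply (atoms_cover (C := C)). intro u.
      destruct (classic (reach u)) as [Hu|Hu].
      - assert (H : pv (pos u) (FBox p1 phi :: neg u)).
        { apply box_R_of_acc. intros u' Hacc'. apply Hphi.
          apply rt_trans with u; auto. apply rt_step, IH1; auto. }
        weaken H.
      - assert (H := proj2 (Hphi u) Hu). weaken H. }
    assert (Hv : pv [phi] [nchar v]).
    { apply nchar_iff. assert (H := proj2 (Hphi v) Hnr). weaken H. }
    apply Hacc, (entail_cut Hw), (entail_trans (box_star_ind Hinv)), box_mono, Hv.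
  - intros [HbC Hb] w v Hacc.
    assert (Hbw : In b (pos w)).
    { apply NNPP; intro Hbw. apply Hacc, R_TestR.
      apply (ax b); simpl; auto using neg_of_not_pos. }
    split; [| apply Hb, Hbw].
    apply NNPP; intro Hne. apply Hacc, R_TestR.
    assert (H := nchar_other Hne). weaken H.
Qed.

Hypothesis HC : fl_closed C.

Lemma pos_fl_succ {w : atom} {x y} : In x (pos w) -> In y (fl_succ x) -> In y C.
Proof. intros Hx Hy. exact (HC _ (pos_in_C _ _ Hx) y Hy). Qed.

Lemma pos_step {w : atom} {x y} :
  In x (pos w) -> pv [x] [y] -> In y (fl_succ x) -> In y (pos w).
Proof.
  intros Hx H Hy. apply pos_entail with (L := [x]); [incl_solve | exact H |].
  exact (pos_fl_succ Hx Hy).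
Qed.

Lemma box_elim_pos p : tests_faithful p ->
  forall a w v, In (FBox p a) (pos w) -> rel M p w v -> In a (pos v).
Proof.
  induction p as [al | p1 IH1 p2 IH2 | p1 IH1 p2 IH2 | p1 IH1 | b]; simpl;
    intros T a w v Hin Hr.
  - apply NNPP; intro Ha. apply (not_acc_of_box (v := v) a Hin); auto.
    apply neg_of_not_pos; auto. apply (pos_fl_succ Hin); simpl; auto.
  - destruct T as [T1 T2], Hr as [u [Hwu Huv]].
    apply (IH2 T2 a u v); auto. apply (IH1 T1 _ w u); auto.
    apply (pos_step Hin (box_seq _ _ _)); simpl; auto.
  - destruct T as [T1 T2], Hr as [Hr | Hr].
    + apply (IH1 T1 a w v); auto.
      apply (pos_step Hin (box_cup_l _ _ _)); simpl; auto.
    + apply (IH2 T2 a w v); auto.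
      apply (pos_step Hin (box_cup_r _ _ _)); simpl; auto.
  - assert (Hv : In (FBox (PStar p1) a) (pos v)).
    { induction Hr as [x y Hxy | x | x y z _ IHxy _ IHyz]; auto.
      apply (IH1 T _ x y); auto.
      apply (pos_step Hin (box_star_step _ _)); simpl; auto. }
    apply (pos_step Hv (box_star_refl _ _)); simpl; auto.
  - destruct T as [_ Hb], Hr as [<- Hbw]. apply Hb in Hbw.
    apply pos_entail with (L := [FBox (PTest b) a; b]);
      [incl_solve | apply box_test |].
    apply (pos_fl_succ Hin); simpl; auto.
Qed.

Lemma boxC_elim_pos p : tests_faithful p ->
  forall a w v, In (FBoxC p a) (pos v) -> rel M p w v -> In a (pos w).
Proof.
  induction p as [al | p1 IH1 p2 IH2 | p1 IH1 p2 IH2 | p1 IH1 | b]; simpl;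
    intros T a w v Hin Hr.
  - apply NNPP; intro Ha. apply (not_acc_of_boxC (w := w) a Hin); auto.
    apply neg_of_not_pos; auto. apply (pos_fl_succ Hin); simpl; auto.
  - destruct T as [T1 T2], Hr as [u [Hwu Huv]].
    apply (IH1 T1 a w u); auto. apply (IH2 T2 _ u v); auto.
    apply (pos_step Hin (boxC_seq _ _ _)); simpl; auto.
  - destruct T as [T1 T2], Hr as [Hr | Hr].
    + apply (IH1 T1 a w v); auto.
      apply (pos_step Hin (boxC_cup_l _ _ _)); simpl; auto.
    + apply (IH2 T2 a w v); auto.
      apply (pos_step Hin (boxC_cup_r _ _ _)); simpl; auto.
  - assert (Hw : In (FBoxC (PStar p1) a) (pos w)).
    { induction Hr as [x y Hxy | x | x y z _ IHxy _ IHyz]; auto.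
      apply (IH1 T _ x y); auto.
      apply (pos_step Hin (boxC_star_step _ _)); simpl; auto. }
    apply (pos_step Hw (boxC_star_refl _ _)); simpl; auto.
  - destruct T as [_ Hb], Hr as [-> Hbw]. apply Hb in Hbw.
    apply pos_entail with (L := [FBoxC (PTest b) a; b]);
      [incl_solve | apply boxC_test |].
    apply (pos_fl_succ Hin); simpl; auto.
Qed.

Lemma truth_lemma :
  (forall f, In f C -> forall w, sat M w f <-> In f (pos w)) /\
  (forall p, (forall a, In (FBox p a) C -> tests_faithful p) /\
             (forall a, In (FBoxC p a) C -> tests_faithful p)).
Proof.
  apply (form_prog_mutind
    (fun f => In f C -> forall w, sat M w f <-> In f (pos w))
    (fun p => (forall a, In (FBox p a) C -> tests_faithful p) /\
              (forall a, In (FBoxC p a) C -> tests_faithful p))); simpl.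
  - intros _ w. split; [tauto | intro H].
    apply (atom_consistent w).
    eapply R_Wk; [apply (@R_Bot _ _ [] []) | incl_solve | incl_solve].
  - tauto.
  - intros a IHa b IHb Hab w.
    assert (Ha : In a C) by (apply (HC _ Hab); simpl; auto).
    assert (Hb : In b C) by (apply (HC _ Hab); simpl; auto).
    rewrite (IHa Ha), (IHb Hb). split.
    + intro H. apply pos_of_provable; auto. apply R_ImpR.
      destruct (classic (In a (pos w))) as [Hi|Hi].
      * apply (ax b); simpl; auto.
      * apply (ax a); simpl; auto using neg_of_not_pos.
    + intros Himp Hain.
      apply pos_entail with (L := [FImp a b; a]); [incl_solve | | exact Hb].
      apply R_ImpL; [apply (ax a) | apply (ax b)]; simpl; auto.
  - intros p [Tp _] a IHa Hpa w. specialize (Tp a Hpa).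
    assert (Ha : In a C) by (apply (fl_box_arg HC) with p; exact Hpa).
    split.
    + intro H. apply pos_of_provable; auto. apply box_R_of_acc. intros u Hacc.
      apply (ax a); simpl; auto. apply (IHa Ha), H, rel_of_acc; auto.
    + intros Hin v Hr. apply (IHa Ha). apply (box_elim_pos p Tp a w v); auto.
  - intros p [_ Tp] a IHa Hpa w. specialize (Tp a Hpa).
    assert (Ha : In a C) by (apply (fl_boxC_arg HC) with p; exact Hpa).
    split.
    + intro H. apply pos_of_provable; auto. apply boxC_R_of_acc. intros u Hacc.
      apply (ax a); simpl; auto. apply (IHa Ha), H, rel_of_acc; auto.
    + intros Hin u Hr. apply (IHa Ha). apply (boxC_elim_pos p Tp a u w); auto.
  - auto.
  - intros p1 [B1 C1] p2 [B2 C2]. split; intros a Ha; split.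
    + apply (B1 (FBox p2 a)), (HC _ Ha); simpl; auto.
    + apply (B2 a), (fl_box_arg HC) with p1, (HC _ Ha); simpl; auto.
    + apply (C1 a), (fl_boxC_arg HC) with p2, (HC _ Ha); simpl; auto.
    + apply (C2 (FBoxC p1 a)), (HC _ Ha); simpl; auto.
  - intros p1 [B1 C1] p2 [B2 C2]. split; intros a Ha; split;
      [apply (B1 a) | apply (B2 a) | apply (C1 a) | apply (C2 a)];
      apply (HC _ Ha); simpl; auto.
  - intros p1 [B1 C1]. split; intros a Ha;
      [apply (B1 (FBox (PStar p1) a)) | apply (C1 (FBoxC (PStar p1) a))];
      apply (HC _ Ha); simpl; auto.
  - intros b IHb. split; intros a Ha;
      assert (Hb : In b C) by (apply (HC _ Ha); simpl; auto); auto.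
Qed.

End Canonical.

Theorem mainTheorem2 (Prp AtProg : Type) (G D : list (form Prp AtProg)) :
  valid (G, D) -> provable G D.
Proof.
  intro Hvalid. apply NNPP. intro Hunprov.
  set (C := fl_closure (G ++ D)).
  assert (HC : fl_closed C) by apply fl_closure_closed.
  assert (HGD : incl (G ++ D) C) by apply fl_closure_incl.
  apply incl_app_inv in HGD as [HG HD].
  destruct (extend_to_atom Hunprov HG HD) as [w [HGw HDw]].
  destruct (Hvalid (canonical_model w) w) as [psi [Hpsi Hsat]].
  - intros f Hf. apply (proj1 (truth_lemma w HC)); auto.
  - apply (proj1 (truth_lemma w HC)) in Hsat; auto.
    exact (pos_neg_disjoint w psi Hsat (HDw psi Hpsi)).
Qed.
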